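(* Assume the standing setting and assumption in the context. Fix $b>r$ with $\mu(r,b]>0$. There exist a constant $C>0$ and an index $N\in\mathbb N$, depending on $d$, $b$ and $\mu$, such that for any interval $(c,h]\subset[b,\infty)$ and any $x\in\mathbb Z^d$ with $|x|_1\ge N$, $$\mathbb E\big[\nu_x(c,h]\big]\ \le\ C\,\mu(c,h].$$
   Context: Setting: $d\ge2$; $\mathcal E^d$ nearest-neighbor edges of $\mathbb Z^d$; $\{\tau_e\}$ i.i.d. non-negative with law $\mu$, distribution function $F$, essential infimum $r$. Standing assumption: $F(r)<p_c(d)$ if $r=0$ and $F(r)<\vec p_c(d)$ if $r>0$ ($p_c(d)$, $\vec p_c(d)$: critical probabilities of Bernoulli bond and oriented bond percolation on $\mathbb Z^d$). $T(\gamma)=\sum_{e\in\gamma}\tau_e$; geodesics are vertex self-avoiding paths minimizing $T$. Fix a deterministic ordering of finite vertex self-avoiding paths; $\pi^{(x)}$ is the first geodesic from $0$ to $x$ in it. $\nu_x(B)=\frac{1}{|\pi^{(x)}|}\#\{e\in\pi^{(x)}:\tau_e\in B\}$. *)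

From HB Require Import structures.
From mathcomp Require Import all_boot all_order all_algebra.
From mathcomp Require Import all_classical all_reals all_analysis.
Set Implicit Arguments. Unset Strict Implicit. Unset Printing Implicit Defensive.
Import Order.TTheory GRing.Theory Num.Theory.
Local Open Scope classical_set_scope.
Local Open Scope ring_scope.

Definition Vtx (d : nat) := 'rV[int]_d.
(* The edge {x, x + e_i} is indexed by (x, i): a bijection with E^d. *)
Definition Edge (d : nat) := ('rV[int]_d * 'I_d)%type.

Definition unit_vec (d : nat) (i : 'I_d) : 'rV[int]_d := delta_mx 0 i.

Definition l1 (d : nat) (x : 'rV[int]_d) : nat := (\sum_(i < d) absz (x ord0 i))%N.

Definition adjacent (d : nat) (u v : 'rV[int]_d) : bool := l1 (v - u) == 1%N.

Definition edge_of (d : nat) (u v : 'rV[int]_d) : option (Edge d) :=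
  match [pick i : 'I_d | v == u + unit_vec i] with
  | Some i => Some (u, i)
  | None => match [pick i : 'I_d | u == v + unit_vec i] with
            | Some i => Some (v, i)
            | None => None
            end
  end.

Definition path_edges (d : nat) (s : seq 'rV[int]_d) : seq (Edge d) :=
  pmap (fun p => edge_of p.1 p.2) (zip s (behead s)).

Definition nn_path (d : nat) (s : seq 'rV[int]_d) : bool :=
  all (fun p => adjacent p.1 p.2) (zip s (behead s)).

Definition sa_path (d : nat) (u v : 'rV[int]_d) (s : seq 'rV[int]_d) : Prop :=
  [/\ s != [::], head u s = u, last u s = v, nn_path s & uniq s].

Definition passage_time (d : nat) (R : realType) (t : Edge d -> R)
  (s : seq 'rV[int]_d) : R := \sum_(e <- path_edges s) t e.

Definition geodesic (d : nat) (R : realType) (t : Edge d -> R)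
  (u v : 'rV[int]_d) (s : seq 'rV[int]_d) : Prop :=
  sa_path u v s /\
  forall s', sa_path u v s' -> passage_time t s <= passage_time t s'.

Definition path_ordering (d : nat) (ord : rel (seq 'rV[int]_d)) : Prop :=
  [/\ total ord, transitive ord & antisymmetric ord].

Definition first_geodesic (d : nat) (R : realType) (ord : rel (seq 'rV[int]_d))
  (t : Edge d -> R) (x : 'rV[int]_d) (s : seq 'rV[int]_d) : Prop :=
  geodesic t 0 x s /\ forall s', geodesic t 0 x s' -> ord s s'.

(* pi^(x); arbitrary ([::]) on the (null) event that it does not exist *)
Definition pi_x (d : nat) (R : realType) (ord : rel (seq 'rV[int]_d))
  (t : Edge d -> R) (x : 'rV[int]_d) : seq 'rV[int]_d :=
  xget [::] [set s | first_geodesic ord t x s].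

Definition nu_x (d : nat) (R : realType) (ord : rel (seq 'rV[int]_d))
  (t : Edge d -> R) (x : 'rV[int]_d) (B : set R) : R :=
  let es := path_edges (pi_x ord t x) in
  (count (fun e => `[< B (t e) >]) es)%:R / (size es)%:R.

Definition iid_law (d : nat) (R : realType) (dd : measure_display)
  (Omega : measurableType dd) (P : probability Omega R)
  (tau : Edge d -> Omega -> R) (mu : probability R R) : Prop :=
  (forall e, measurable_fun setT (tau e)) /\
  forall (S : seq (Edge d)) (B : Edge d -> set R), uniq S ->
    (forall e, measurable (B e)) ->
    P (\bigcap_(e in [set` S]) (tau e @^-1` B e)) = (\prod_(e <- S) mu (B e))%E.

Definition bernoulli_family (d : nat) (R : realType) (dd : measure_display)
  (Omega : measurableType dd) (P : probability Omega R)
  (p : R) (om : Edge d -> Omega -> bool) : Prop :=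
  (forall e, measurable [set w | om e w]) /\
  forall (S : seq (Edge d)) (b : Edge d -> bool), uniq S ->
    P (\bigcap_(e in [set` S]) [set w | om e w = b e]) =
    (\prod_(e <- S) (if b e then p else 1 - p))%:E.

Definition open_cluster (d : nat) (open : Edge d -> bool) : set 'rV[int]_d :=
  [set y | exists s, sa_path 0 y s /\ all open (path_edges s)].

Definition oriented_step (d : nat) (open : Edge d -> bool) (u v : 'rV[int]_d) : bool :=
  [exists i : 'I_d, (v == u + unit_vec i) && open (u, i)].

Definition oriented_cluster (d : nat) (open : Edge d -> bool) : set 'rV[int]_d :=
  [set y | exists s, head 0 s = 0 /\ s != [::] /\ last 0 s = y /\
     all (fun p => oriented_step open p.1 p.2) (zip s (behead s))].

(* theta(p) = 0 : no percolation at parameter p (law-determined, so stated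
   for every probability space carrying an i.i.d. Bernoulli(p) family) *)
Definition no_percolation (d : nat) (R : realType) (p : R) : Prop :=
  forall (dd : measure_display) (Omega : measurableType dd)
    (P : probability Omega R) (om : Edge d -> Omega -> bool),
  bernoulli_family P p om ->
  P [set w | ~ finite_set (open_cluster (fun e => om e w))] = 0%E.

Definition no_oriented_percolation (d : nat) (R : realType) (p : R) : Prop :=
  forall (dd : measure_display) (Omega : measurableType dd)
    (P : probability Omega R) (om : Edge d -> Omega -> bool),
  bernoulli_family P p om ->
  P [set w | ~ finite_set (oriented_cluster (fun e => om e w))] = 0%E.

Definition p_c (R : realType) (d : nat) : R :=
  sup [set p : R | 0 <= p <= 1 /\ no_percolation d p].

Definition vec_p_c (R : realType) (d : nat) : R :=
  sup [set p : R | 0 <= p <= 1 /\ no_oriented_percolation d p].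

Definition distF (R : realType) (mu : probability R R) (t : R) : R :=
  fine (mu [set` `]-oo, t]]).

Definition ess_infimum (R : realType) (mu : probability R R) : R :=
  inf [set t : R | 0 < distF mu t].

From HB Require Import structures.
From mathcomp Require Import all_boot all_order all_algebra.
From mathcomp Require Import all_classical all_reals all_analysis.
From mathcomp Require Import lra measurable_realfun.
Import Order.TTheory GRing.Theory Num.Theory.
Local Open Scope classical_set_scope.
Local Open Scope ring_scope.
Set Implicit Arguments. Unset Strict Implicit. Unset Printing Implicit Defensive.

(* Resampling argument.  Let B = (c, h] and B' = (r, b], so that every value in
   B' is at most c and every value in B at least c.  For a self-avoiding path s
   and an edge e of s, let E(s, e) be the event that s is the first geodesic once
   tau_e is replaced by the constant c; it depends only on the other edges, hence
   is independent of tau_e.  Lowering the weight of an edge of the first geodesic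
   keeps it the first geodesic, so
     {pi = s, tau_e in B} <= E(s, e) /\ {tau_e in B}   and
     E(s, e) /\ {tau_e in B'} <= {pi = s, tau_e in B'}.
   Summing P(E(s, e)) / |s| over all paths s and edges e of s gives a quantity S
   with E nu_x(B) <= mu(B) S and mu(B') S <= E nu_x(B') <= 1.  Hence
   C = 1 / mu(r, b] and N = 0 work. *)

Lemma mem_zip (T1 T2 : eqType) (s : seq T1) (t : seq T2) x y :
  (x, y) \in zip s t -> x \in s /\ y \in t.
Proof.
elim: s t => [|a s IHs] [|b t] //=; rewrite !inE => /orP[/eqP[-> ->]|/IHs[-> ->]].
  by rewrite !eqxx.
by rewrite !orbT.
Qed.

Lemma edge_of_Some d (u v a : 'rV[int]_d) i : edge_of u v = Some (a, i) ->
  (u = a /\ v = a + unit_vec i) \/ (v = a /\ u = a + unit_vec i).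
Proof.
rewrite /edge_of; case: pickP => [j /eqP -> [<- <-]|_]; first by left.
by case: pickP => [j /eqP -> [<- <-]|_] //; right.
Qed.

Lemma mem_path_edges d (s : seq 'rV[int]_d) f : f \in path_edges s ->
  exists p q, [/\ p \in s, q \in s & edge_of p q = Some f].
Proof.
rewrite mem_pmap => /mapP[[p q] /mem_zip[ps /mem_behead qs] /= pqf].
by exists p, q.
Qed.

Lemma uniq_path_edges d (s : seq 'rV[int]_d) : uniq s -> uniq (path_edges s).
Proof.
elim: s => [|u [|v s] IHs] //= /andP[us uniq_vs].
rewrite /path_edges /=; case uv: (edge_of u v) => [[a i]|]; last exact: IHs.
rewrite /= IHs // andbT; apply/negP => /mem_path_edges[p [q [ps qs pq]]].
have end_s z : (z == a) || (z == a + unit_vec i) -> z \in v :: s.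
  by move: ps qs; case: (edge_of_Some pq) => -[-> ->] ps qs /orP[] /eqP ->.
move/negP: us; apply; apply: end_s.
by case: (edge_of_Some uv) => [[-> _]|[_ ->]]; rewrite eqxx ?orbT.
Qed.

Lemma passage_time_update d (R : realType) (t t' : Edge d -> R) e s :
  (forall f, f != e -> t' f = t f) ->
  passage_time t' s =
    passage_time t s + (t' e - t e) * (count_mem e (path_edges s))%:R.
Proof.
move=> t't; rewrite /passage_time; elim: (path_edges s) => [|f es IHes].
  by rewrite !big_nil mulr0 addr0.
rewrite !big_cons IHes /=; have [->|fe] := eqVneq f e.
  by rewrite add1n mulrS; lra.
by rewrite t't // add0n; lra.
Qed.

Lemma uniq_sa_path_edges d (u v : 'rV[int]_d) s :
  sa_path u v s -> uniq (path_edges s).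
Proof. by case=> _ _ _ _ /uniq_path_edges. Qed.

Lemma passage_time_update_sa d (R : realType) (t t' : Edge d -> R) e u v s :
  (forall f, f != e -> t' f = t f) -> sa_path u v s ->
  passage_time t' s = passage_time t s + (t' e - t e) * (e \in path_edges s)%:R.
Proof.
move=> t't /uniq_sa_path_edges us.
by rewrite (passage_time_update s t't) count_uniq_mem.
Qed.

Lemma first_geodesic_lower d (R : realType) (ord : rel (seq 'rV[int]_d))
    (t t' : Edge d -> R) e x s :
  (forall f, f != e -> t' f = t f) -> t' e <= t e -> e \in path_edges s ->
  first_geodesic ord t x s -> first_geodesic ord t' x s.
Proof.
move=> t't le_e es [[sa_s geo_s] first_s].
have T's : passage_time t' s = passage_time t s + (t' e - t e).
  by rewrite (passage_time_update_sa t't sa_s) es mulr1.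
have T'p p : sa_path 0 x p ->
    passage_time t p + (t' e - t e) <= passage_time t' p <= passage_time t p.
  move=> /(passage_time_update_sa t't) ->.
  by case: (e \in path_edges p); rewrite ?mulr1 ?mulr0; lra.
have geo'_s : geodesic t' 0 x s.
  by split=> // p /[dup] /T'p ? /geo_s ?; lra.
split=> // s' [sa_s' geo'_s']; apply: first_s; split=> // p /geo_s ?.
by have := geo'_s' _ sa_s; have := T'p _ sa_s'; lra.
Qed.

Lemma first_geodesic_unique d (R : realType) (ord : rel (seq 'rV[int]_d))
    (t : Edge d -> R) x s1 s2 :
  path_ordering ord -> first_geodesic ord t x s1 -> first_geodesic ord t x s2 ->
  s1 = s2.
Proof. by case=> _ _ ord_anti [g1 f1] [g2 f2]; apply: ord_anti; rewrite f1 ?f2. Qed.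

Lemma pi_xE d (R : realType) (ord : rel (seq 'rV[int]_d)) (t : Edge d -> R) x s :
  path_ordering ord -> first_geodesic ord t x s -> pi_x ord t x = s.
Proof.
by move=> ord_order fs; apply: xget_unique => // s' /first_geodesic_unique; apply.
Qed.

Lemma pi_x_nil d (R : realType) (ord : rel (seq 'rV[int]_d)) (t : Edge d -> R) x :
  (forall s, ~ first_geodesic ord t x s) -> pi_x ord t x = [::].
Proof. exact: xgetPN. Qed.

Lemma measurable_bigcap_countable (dd : measure_display) (T : measurableType dd)
    (I : countType) (D : set I) (F : I -> set T) :
  (forall i, D i -> measurable (F i)) -> measurable (\bigcap_(i in D) F i).
Proof.
move=> mF; rewrite -[X in measurable X]setCK setC_bigcap bigcup_mkcond.
apply/measurableC/countable_bigcupT_measurable => [|i]; first exact: countableP.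
by case: ifPn => // /set_mem /mF /measurableC.
Qed.

Section measurable_geodesics.
Context (dd : measure_display) (T : measurableType dd) (R : realType) (d : nat).
Variable Y : Edge d -> T -> R.
Hypothesis mY : forall e, measurable_fun setT (Y e).

Lemma measurable_passage_time s :
  measurable_fun setT (fun w => passage_time (fun e => Y e w) s).
Proof. exact: measurable_sum. Qed.

Lemma measurable_geodesic u v s : measurable [set w | geodesic (fun e => Y e w) u v s].
Proof.
have [sa_s|not_sa] := pselect (sa_path u v s); last first.
  by rewrite (_ : [set w | _] = set0) //; apply/seteqP; split=> w // [].
rewrite (_ : [set w | _] = \bigcap_(p in sa_path u v)
    [set w | passage_time (fun e => Y e w) s <= passage_time (fun e => Y e w) p]).
  apply: measurable_bigcap_countable => p _; rewrite -[X in measurable X]setTI.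
  by apply: measurable_fun_le => //; exact: measurable_passage_time.
by apply/seteqP; split=> w => [[]|] //=; split.
Qed.

Lemma measurable_first_geodesic ord x s :
  measurable [set w | first_geodesic ord (fun e => Y e w) x s].
Proof.
rewrite (_ : [set w | _] = [set w | geodesic (fun e => Y e w) 0 x s] `&`
    \bigcap_(p in [set p | ~~ ord s p]) ~` [set w | geodesic (fun e => Y e w) 0 x p]).
  apply: measurableI; first exact: measurable_geodesic.
  by apply: measurable_bigcap_countable => p _; apply/measurableC/measurable_geodesic.
apply/seteqP; split=> w [geo_s first_s]; split=> // p.
  by move=> /negP not_sp /first_s.
by case: (boolP (ord s p)) => // /first_s.
Qed.

End measurable_geodesics.

Section edge_independence.
Local Open Scope ereal_scope.
Context (dd : measure_display) (Omega : measurableType dd) (R : realType) (d : nat).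
Variables (P : probability Omega R) (tau : Edge d -> Omega -> R) (mu : probability R R).
Hypothesis tau_iid : iid_law P tau mu.

Definition cylinder (S : seq (Edge d)) (B : Edge d -> set R) : set Omega :=
  \bigcap_(f in [set` S]) (tau f @^-1` B f).

(* A pi-system generating the sigma-algebra of the weights off the edge e. *)
Definition cylinder_off (e : Edge d) : set (set Omega) :=
  [set A | exists S B, [/\ uniq S, e \notin S,
     (forall f, measurable (B f)) & A = cylinder S B]].

Lemma measurable_tau_preimage f B : measurable B -> measurable (tau f @^-1` B).
Proof. by move=> mB; rewrite -[X in measurable X]setTI; apply: tau_iid.1. Qed.

Lemma measurable_cylinder S B :
  (forall f, measurable (B f)) -> measurable (cylinder S B).
Proof.
by move=> mB; apply: measurable_bigcap_countable => f _; apply: measurable_tau_preimage.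
Qed.

Lemma cylinder1 f B : cylinder [:: f] B = tau f @^-1` B f.
Proof. by rewrite /cylinder set_cons1 bigcap_set1. Qed.

Lemma cylinder_cons f S B : cylinder (f :: S) B = tau f @^-1` B f `&` cylinder S B.
Proof.
rewrite /cylinder; have -> : [set` f :: S] = f |` [set` S].
  apply/seteqP; split=> g /=; rewrite inE; first by case/orP=> [/eqP|]; [left|right].
  by case=> [->|->]; rewrite ?eqxx ?orbT.
exact: (bigcap_setU1 (fun g => tau g @^-1` B g)).
Qed.

Lemma cylinder_off_measurable e A : cylinder_off e A -> measurable A.
Proof. by case=> S [B [_ _ mB ->]]; apply: measurable_cylinder. Qed.

Lemma cylinder_off_setT e : cylinder_off e setT.
Proof.
exists [::], (fun _ => setT); split => //.
by rewrite /cylinder set_nil bigcap_set0.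
Qed.

Lemma cylinder_off_setI e : setI_closed (cylinder_off e).
Proof.
move=> _ _ [S1 [B1 [_ eS1 mB1 ->]]] [S2 [B2 [_ eS2 mB2 ->]]].
pose B f := (if f \in S1 then B1 f else setT) `&` (if f \in S2 then B2 f else setT).
exists (undup (S1 ++ S2)), B; split.
- exact: undup_uniq.
- by rewrite mem_undup mem_cat negb_or eS1 eS2.
- by move=> f; apply: measurableI; case: ifP.
apply/seteqP; split=> w /=.
  move=> [in1 in2] f /=; rewrite mem_undup mem_cat /B.
  by case: ifPn => [/in1|_]; case: ifPn => [/in2|_] //= ? ? ?; split.
move=> inB; split=> f /= fS; have /inB[] : f \in undup (S1 ++ S2).
- by rewrite mem_undup mem_cat fS.
- by rewrite fS.
- by rewrite mem_undup mem_cat fS orbT.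
- by rewrite fS.
Qed.

Lemma cylinder_off_indep e A B : cylinder_off e A -> measurable B ->
  P (A `&` tau e @^-1` B) = mu B * P A.
Proof.
move=> [S [BS [uS eS mBS ->]]] mB.
pose B' f := if f == e then B else BS f.
have mB' f : measurable (B' f) by rewrite /B'; case: ifP.
have B'S : {in S, B' =1 BS}.
  by move=> f fS; rewrite /B'; case: eqP => // fe; move: eS; rewrite -fe fS.
have := tau_iid.2 (e :: S) B' _ mB'; rewrite /= eS uS => /(_ isT).
rewrite -/(cylinder _ _) cylinder_cons big_cons.
have -> : \prod_(f <- S) mu (B' f) = \prod_(f <- S) mu (BS f).
  by apply: eq_big_seq => f /B'S ->.
have -> : cylinder S B' = cylinder S BS by apply: eq_bigcapr => f /B'S ->.
by rewrite /B' eqxx setIC => ->; rewrite (tau_iid.2 S BS uS mBS).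
Qed.

Lemma sigma_off_indep e A B : <<s cylinder_off e >> A -> measurable B ->
  P (A `&` tau e @^-1` B) = mu B * P A.
Proof.
move=> sA mB.
have m_e : measurable (tau e @^-1` B) by apply: measurable_tau_preimage.
have muB_ge0 : (0 <= fine (mu B))%R by apply: fine_ge0.
have muBE : mu B = (fine (mu B))%:E by rewrite fineK // fin_num_measure.
have cover : \bigcup_(_ : nat) [set: Omega] = [set: Omega].
  by apply/seteqP; split=> // w _; exists 0%N.
have agree A' : cylinder_off e A' -> mrestr P m_e A' = mscale (NngNum muB_ge0) P A'.
  by move=> /cylinder_off_indep /(_ mB); rewrite /mrestr /mscale /= -muBE.
have finite (k : nat) : mrestr P m_e setT < +oo.
  by rewrite /mrestr setTI (le_lt_trans (probability_le1 _ m_e)) ?ltey.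
rewrite muBE; exact: (@g_sigma_algebra_measure_unique _ _ _ _
  (@cylinder_off_measurable e) (fun=> setT) (fun=> cylinder_off_setT e) cover _ _
  (@cylinder_off_setI e) agree finite _ sA).
Qed.

Lemma sigma_off_measurable e A : <<s cylinder_off e >> A -> measurable A.
Proof.
exact: smallest_sub (@sigma_algebra_measurable _ Omega) (@cylinder_off_measurable e) A.
Qed.

Lemma sigma_off_tau f e : f != e ->
  measurable_fun setT (tau f : g_sigma_algebraType (cylinder_off e) -> R).
Proof.
move=> fe _ B mB; rewrite setTI; apply: sub_sigma_algebra.
exists [:: f], (fun _ => B); split=> //; first by rewrite inE eq_sym.
by rewrite cylinder1.
Qed.

End edge_independence.

Lemma nneseries_single (R : realType) (f : nat -> \bar R) k :
  (forall n, (0 <= f n)%E) -> (forall n, n != k -> f n = 0%E) ->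
  (\sum_(n <oo) f n = f k)%E.
Proof.
move=> f_ge0 fk; rewrite (@nneseries_split _ _ 0 k.+1) // add0n.
rewrite eseries0 => [|i ki _]; last by rewrite fk // gtn_eqF.
rewrite adde0 big_nat_recr //= big1_seq ?add0e // => i.
by rewrite mem_index_iota => /andP[_ ik]; rewrite fk // ltn_eqF.
Qed.

Section countable_sum.
Local Open Scope ereal_scope.
Context (R : realType) (T : countType).

Definition countable_sum (f : T -> \bar R) : \bar R :=
  \sum_(n <oo) oapp f 0 (pickle_inv n).

Lemma countable_sum_single (f : T -> \bar R) t :
  (forall u, 0 <= f u) -> (forall u, u != t -> f u = 0) -> countable_sum f = f t.
Proof.
move=> f_ge0 ft; rewrite /countable_sum (nneseries_single (k := pickle t)).
- by rewrite pickleK_inv.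
- by move=> n; case: pickle_inv.
move=> n; case En: (pickle_inv n) => [u|] //= nt; apply: ft; apply: contra nt => /eqP ut.
by rewrite -(@pickle_invK T n) En /= ut.
Qed.

Lemma countable_sum0 (f : T -> \bar R) : (forall u, f u = 0) -> countable_sum f = 0.
Proof. by move=> f0; apply: eseries0 => n _ _; case: pickle_inv. Qed.

Lemma le_countable_sum (f g : T -> \bar R) : (forall u, 0 <= f u) ->
  (forall u, f u <= g u) -> countable_sum f <= countable_sum g.
Proof. by move=> f_ge0 fg; apply: lee_nneseries => n *; case: pickle_inv. Qed.

Lemma countable_sumZl (f : T -> \bar R) (r : R) : (forall u, 0 <= f u) ->
  r%:E * countable_sum f = countable_sum (fun u => r%:E * f u).
Proof.
move=> f_ge0; rewrite /countable_sum -nneseriesZl => [|n _]; last by case: pickle_inv.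
by apply: eq_eseriesr => n _; case: pickle_inv => //=; rewrite mule0.
Qed.

Lemma integral_countable_sum (dd : measure_display) (Omega : measurableType dd)
    (P : {measure set Omega -> \bar R}) (F : T -> Omega -> \bar R) :
  (forall u, measurable_fun setT (F u)) -> (forall u w, 0 <= F u w) ->
  \int[P]_w countable_sum (fun u => F u w) = countable_sum (fun u => \int[P]_w F u w).
Proof.
move=> mF F_ge0; rewrite /countable_sum integral_nneseries //.
- by apply: eq_eseriesr => n _; case: pickle_inv => //=; rewrite integral0.
- by move=> n; case: (pickle_inv n) => [u|]; [exact: mF | exact: measurable_cst].
- by move=> n w _; case: (pickle_inv n) => [u|] //=; exact: F_ge0.
Qed.

Lemma measurable_countable_sum (dd : measure_display) (Omega : measurableType dd)
    (F : T -> Omega -> \bar R) :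
  (forall u, measurable_fun setT (F u)) -> (forall u w, 0 <= F u w) ->
  measurable_fun setT (fun w => countable_sum (fun u => F u w)).
Proof.
move=> mF F_ge0; apply: ge0_emeasurable_sum => [n w _ _|n _].
  by case: (pickle_inv n) => [u|] //=; exact: F_ge0.
by case: (pickle_inv n) => [u|]; [exact: mF | exact: measurable_cst].
Qed.

End countable_sum.

Section resampling.
Local Open Scope ereal_scope.
Context (R : realType) (d : nat) (mu : probability R R).
Context (dd : measure_display) (Omega : measurableType dd) (P : probability Omega R).
Variables (tau : Edge d -> Omega -> R) (ord : rel (seq 'rV[int]_d)) (x : 'rV[int]_d).
Hypothesis tau_iid : iid_law P tau mu.
Hypothesis ord_order : path_ordering ord.

Definition geodesic_event (s : seq 'rV[int]_d) : set Omega :=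
  [set w | first_geodesic ord (fun e => tau e w) x s].

Definition resampled_event (c : R) (s : seq 'rV[int]_d) (e : Edge d) : set Omega :=
  [set w | first_geodesic ord (fun f => if f == e then c else tau f w) x s].

Let inv_length (s : seq 'rV[int]_d) : R := (size (path_edges s))%:R^-1.

Let inv_length_ge0 s : (0 <= inv_length s)%R.
Proof. by rewrite invr_ge0. Qed.

Definition nu_path (B : set R) s w :=
  \sum_(e <- path_edges s)
    (inv_length s * \1_(geodesic_event s `&` tau e @^-1` B) w)%:E.

Definition nu_path_mass (B : set R) s :=
  \sum_(e <- path_edges s) (inv_length s)%:E * P (geodesic_event s `&` tau e @^-1` B).

Definition resampled_mass (c : R) s :=
  \sum_(e <- path_edges s) (inv_length s)%:E * P (resampled_event c s e).

Lemma measurable_geodesic_event_edge s e B : measurable B ->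
  measurable (geodesic_event s `&` tau e @^-1` B).
Proof.
move=> mB; apply: measurableI (measurable_tau_preimage tau_iid e mB).
exact: measurable_first_geodesic tau_iid.1 ord x s.
Qed.

Lemma resampled_event_sigma_off c s e :
  <<s cylinder_off tau e >> (resampled_event c s e).
Proof.
pose Y f (w : g_sigma_algebraType (cylinder_off tau e)) :=
  if f == e then c else tau f w.
apply: (measurable_first_geodesic (Y := Y)) => f.
by rewrite /Y; case: eqVneq => [_|/sigma_off_tau//]; exact: measurable_cst.
Qed.

Lemma nu_path_ge0 B s w : 0 <= nu_path B s w.
Proof. by apply: sume_ge0 => e _; rewrite lee_fin mulr_ge0. Qed.

Lemma measurable_nu_path B s : measurable B -> measurable_fun setT (nu_path B s).
Proof.
move=> mB; apply: emeasurable_sum => e; apply/measurable_EFinP.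
apply: measurable_funM; first exact: measurable_cst.
exact/measurable_indic/measurable_geodesic_event_edge.
Qed.

Lemma integral_nu_path B s : measurable B -> \int[P]_w nu_path B s w = nu_path_mass B s.
Proof.
move=> mB; have mI e := measurable_geodesic_event_edge s e mB.
rewrite ge0_integral_sum // => [|e|e w _].
- apply: eq_bigr => e _; under eq_integral do rewrite EFinM.
  rewrite ge0_integralZl_EFin ?integral_indic ?setIT //.
  exact/measurable_EFinP/measurable_indic.
- exact/measurable_EFinP/measurable_funM/measurable_indic.
- by rewrite lee_fin mulr_ge0.
Qed.

Lemma nu_path_eq0 B s w : ~ geodesic_event s w -> nu_path B s w = 0.
Proof.
move=> not_s; apply: big1 => e _.
by rewrite indicE memNset ?mulr0 // => -[].
Qed.

Lemma nu_pathE B s w : geodesic_event s w ->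
  nu_path B s w = (nu_x ord (fun e => tau e w) x B)%:E.
Proof.
move=> sw; rewrite /nu_x (pi_xE ord_order sw) /nu_path sumEFin -mulr_sumr mulrC.
rewrite -sum1_count natr_sum; congr (_ / _)%:E; rewrite [RHS]big_mkcond.
apply: eq_bigr => e _; rewrite indicE in_setI (mem_set sw).
by case: asboolP => ?; [rewrite mem_set | rewrite memNset].
Qed.

Lemma nu_x_countable_sum B w : (nu_x ord (fun e => tau e w) x B)%:E =
  countable_sum (fun s => nu_path B s w).
Proof.
have [[s sw]|no_geo] := pselect (exists s, geodesic_event s w).
  rewrite (countable_sum_single (t := s)) ?nu_pathE // => [s'|s' s's].
    exact: nu_path_ge0.
  apply: nu_path_eq0 => s'w.
  by move: s's; rewrite (first_geodesic_unique ord_order s'w sw) eqxx.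
rewrite countable_sum0 => [|s]; last first.
  by apply: nu_path_eq0 => sw; apply: no_geo; exists s.
by rewrite /nu_x pi_x_nil ?mul0r // => s sw; apply: no_geo; exists s.
Qed.

Lemma measurable_nu_x B : measurable B ->
  measurable_fun setT (fun w => (nu_x ord (fun e => tau e w) x B)%:E).
Proof.
move=> mB; rewrite (funext (nu_x_countable_sum B)).
apply: measurable_countable_sum => [s|s w]; first exact: measurable_nu_path.
exact: nu_path_ge0.
Qed.

Lemma expectation_nu_x B : measurable B ->
  'E_P[fun w => nu_x ord (fun e => tau e w) x B] = countable_sum (nu_path_mass B).
Proof.
move=> mB; rewrite unlock; under eq_integral do rewrite nu_x_countable_sum.
rewrite integral_countable_sum => [|s|s w]; last exact: nu_path_ge0.
  by congr countable_sum; apply/funext => s; apply: integral_nu_path.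
exact: measurable_nu_path.
Qed.

Lemma expectation_nu_x_le1 B : measurable B ->
  'E_P[fun w => nu_x ord (fun e => tau e w) x B] <= 1.
Proof.
move=> mB; rewrite unlock; apply: (@le_trans _ _ (\int[P]_w (cst 1 w))); last first.
  by rewrite integral_cst // mul1e probability_le1.
apply: ge0_le_integral => // [w _||w _].
- by rewrite lee_fin /nu_x divr_ge0.
- exact: measurable_nu_x.
rewrite lee_fin /nu_x; set n := size _.
have [->|n_gt0] := posnP n; first by rewrite invr0 mulr0.
by rewrite ler_pdivrMr ?ltr0n // mul1r ler_nat count_size.
Qed.

Lemma measurable_resampled_event c s e : measurable (resampled_event c s e).
Proof. exact: (sigma_off_measurable tau_iid (@resampled_event_sigma_off c s e)). Qed.

Lemma resampled_mass_ge0 c s : 0 <= resampled_mass c s.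
Proof. by apply: sume_ge0 => e _; rewrite mule_ge0 ?lee_fin. Qed.

Lemma nu_path_mass_ge0 B s : 0 <= nu_path_mass B s.
Proof. by apply: sume_ge0 => e _; rewrite mule_ge0 ?lee_fin. Qed.

Lemma geodesic_event_sub_resampled c B s e :
  (forall y, B y -> c <= y)%R -> e \in path_edges s ->
  geodesic_event s `&` tau e @^-1` B `<=` resampled_event c s e `&` tau e @^-1` B.
Proof.
move=> cB es w [sw Bw]; split=> //; apply: (first_geodesic_lower (e := e)) sw => //.
- by move=> f /negbTE ->.
- by rewrite eqxx cB.
Qed.

Lemma resampled_sub_geodesic_event c B s e :
  (forall y, B y -> y <= c)%R -> e \in path_edges s ->
  resampled_event c s e `&` tau e @^-1` B `<=` geodesic_event s `&` tau e @^-1` B.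
Proof.
move=> Bc es w [sw Bw]; split=> //; apply: (first_geodesic_lower (e := e)) sw => //.
- by move=> f /negbTE ->.
- by rewrite eqxx Bc.
Qed.

Lemma mu_resampled_mass c B s : measurable B -> mu B * resampled_mass c s =
  \sum_(e <- path_edges s)
    (inv_length s)%:E * P (resampled_event c s e `&` tau e @^-1` B).
Proof.
move=> mB; rewrite ge0_sume_distrr => [|e _]; last by rewrite mule_ge0 ?lee_fin.
apply: eq_bigr => e _; rewrite muleCA.
by rewrite (sigma_off_indep tau_iid (@resampled_event_sigma_off c s e) mB).
Qed.

Lemma nu_path_mass_le (c : R) (B : set R) s :
  measurable B -> (forall y, B y -> c <= y)%R ->
  nu_path_mass B s <= mu B * resampled_mass c s.
Proof.
move=> mB cB; rewrite mu_resampled_mass // [leLHS]big_seq [leRHS]big_seq.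
apply: lee_sum => e es; rewrite lee_wpmul2l ?lee_fin // le_measure ?inE //.
- exact: measurable_geodesic_event_edge.
- exact/measurableI/(measurable_tau_preimage tau_iid e mB)/measurable_resampled_event.
- exact: geodesic_event_sub_resampled.
Qed.

Lemma nu_path_mass_ge (c : R) (B : set R) s :
  measurable B -> (forall y, B y -> y <= c)%R ->
  mu B * resampled_mass c s <= nu_path_mass B s.
Proof.
move=> mB Bc; rewrite mu_resampled_mass // [leLHS]big_seq [leRHS]big_seq.
apply: lee_sum => e es; rewrite lee_wpmul2l ?lee_fin // le_measure ?inE //.
- exact/measurableI/(measurable_tau_preimage tau_iid e mB)/measurable_resampled_event.
- exact: measurable_geodesic_event_edge.
- exact: resampled_sub_geodesic_event.
Qed.

Lemma expectation_nu_x_le_ratio (c : R) (B1 B2 : set R) :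
  measurable B1 -> measurable B2 ->
  (forall y, B1 y -> c <= y)%R -> (forall y, B2 y -> y <= c)%R -> 0 < mu B2 ->
  'E_P[fun w => nu_x ord (fun e => tau e w) x B1] <= (fine (mu B2))^-1%:E * mu B1.
Proof.
move=> mB1 mB2 cB1 B2c muB2_gt0.
have muE B : measurable B -> (fine (mu B))%:E = mu B.
  by move=> mB; rewrite fineK // fin_num_measure.
set S := countable_sum (resampled_mass c).
have muS B : measurable B ->
    mu B * S = countable_sum (fun s => mu B * resampled_mass c s).
  by move=> mB; rewrite -(muE B mB) countable_sumZl //; exact: resampled_mass_ge0.
have upper : 'E_P[fun w => nu_x ord (fun e => tau e w) x B1] <= mu B1 * S.
  rewrite expectation_nu_x // muS //; apply: le_countable_sum => s.
    exact: nu_path_mass_ge0.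
  exact: nu_path_mass_le.
have lower : mu B2 * S <= 1.
  apply: le_trans (expectation_nu_x_le1 mB2).
  rewrite expectation_nu_x // muS //; apply: le_countable_sum => s.
    by rewrite mule_ge0 ?resampled_mass_ge0.
  exact: nu_path_mass_ge.
have m_gt0 : (0 < fine (mu B2))%R by rewrite -lte_fin muE.
apply: le_trans upper _; rewrite muleC lee_wpmul2r //.
by rewrite -[leRHS]mule1 lee_pdivlMl // muE.
Qed.

End resampling.

Unset Implicit Arguments. Set Strict Implicit.

Theorem proposition2p7 (R : realType) (d : nat) (mu : probability R R) (b : R) :
  (2 <= d)%N ->
  mu [set` `]-oo, 0[] = 0%E ->
  (ess_infimum mu = 0 -> distF mu (ess_infimum mu) < p_c R d) ->
  (0 < ess_infimum mu -> distF mu (ess_infimum mu) < vec_p_c R d) ->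
  ess_infimum mu < b ->
  (0 < mu [set` `]ess_infimum mu, b]])%E ->
  exists (C : R) (N : nat), 0 < C /\
    forall (dd : measure_display) (Omega : measurableType dd)
      (P : probability Omega R) (tau : Edge d -> Omega -> R)
      (ord : rel (seq 'rV[int]_d)),
    iid_law P tau mu ->
    (forall e w, 0 <= tau e w) ->
    path_ordering ord ->
    forall (c h : R) (x : 'rV[int]_d),
    b <= c -> (N <= l1 x)%N ->
    ('E_P[fun w => nu_x ord (fun e => tau e w) x [set` `]c, h]]] <=
       C%:E * mu [set` `]c, h]])%E.
Proof.
move=> _ _ _ _ _ mu_rb_gt0.
have mrb : measurable [set` `]ess_infimum mu, b]] by apply: measurable_itv.
exists (fine (mu [set` `]ess_infimum mu, b]]))^-1, 0%N; split.
  rewrite invr_gt0 fine_gt0 // mu_rb_gt0 /=.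
  by rewrite (le_lt_trans (probability_le1 _ mrb)) ?ltey.
move=> dd Omega P tau ord tau_iid _ ord_order c h x b_le_c _.
apply: (expectation_nu_x_le_ratio _ tau_iid ord_order (c := c)) => // y /=;
  rewrite in_itv /= => /andP[].
- by move=> /ltW.
- by move=> _ /le_trans; apply.
Qed.
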